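(* Let $n\in\mathbb{N}$, $g\in\mathbb{R}$, and $\mathcal{C}=\{q\in\mathbb{R}^n \mid q_1>\dots>q_n\}$. For $q\in\mathcal{C}$, $p\in\mathbb{R}^n$ define the $n\times n$ matrices $$Q_{jk}=q_j\delta_{jk},\qquad L_{jk}=p_j\delta_{jk}+\mathrm{i} g\,\frac{1-\delta_{jk}}{q_j-q_k},\qquad j,k=1,\dots,n,$$ let $v=(1,\dots,1)^\dagger\in\mathbb{R}^n$, and for $z\in\mathbb{C}$ define $$A(z)=\det(z\mathbf{1}_n-L),\qquad C(z)=\operatorname{tr}\big(Q\operatorname{adj}(z\mathbf{1}_n-L)\,vv^\dagger\big),\qquad D(z)=\operatorname{tr}\big(Q\operatorname{adj}(z\mathbf{1}_n-L)\big),$$ where $\operatorname{adj}$ denotes the adjugate matrix (transpose of the cofactor matrix). Then for every $(q,p)\in\mathcal{C}\times\mathbb{R}^n$ and every $z\in\mathbb{C}$, $$C(z)=D(z)+\frac{\mathrm{i} g}{2}A''(z),$$ where $A''$ is the second derivative of the polynomial $A$ in $z$.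
   Context: $Q$ and $L$ are the position and Lax matrices of the rational Calogero--Moser system on the phase space $\mathcal{C}\times\mathbb{R}^n$. *)

From HB Require Import structures.
From mathcomp Require Import all_boot all_order all_algebra.
From mathcomp Require Import complex.
Set Implicit Arguments. Unset Strict Implicit. Unset Printing Implicit Defensive.
Import Order.TTheory GRing.Theory Num.Theory.
Local Open Scope ring_scope.
Local Open Scope complex_scope.

Definition in_config (R : rcfType) (n : nat) (q : 'I_n -> R) : Prop :=
  forall j k : 'I_n, (j < k)%N -> q k < q j.

Definition Qmx (R : rcfType) (n : nat) (q : 'I_n -> R) : 'M[R[i]]_n :=
  \matrix_(j, k) (if j == k then (q j)%:C else 0).

Definition Lmx (R : rcfType) (n : nat) (g : R) (q p : 'I_n -> R) : 'M[R[i]]_n :=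
  \matrix_(j, k) (if j == k then (p j)%:C
                  else 'i%C * g%:C / ((q j)%:C - (q k)%:C)).

Definition vvec (R : rcfType) (n : nat) : 'cV[R[i]]_n := const_mx 1.

Definition Apoly (R : rcfType) (n : nat) (g : R) (q p : 'I_n -> R) : {poly R[i]} :=
  char_poly (Lmx g q p).

Definition Cfun (R : rcfType) (n : nat) (g : R) (q p : 'I_n -> R) (z : R[i]) : R[i] :=
  \tr (Qmx q *m \adj (z%:M - Lmx g q p) *m (vvec R n *m (vvec R n)^T)).

Definition Dfun (R : rcfType) (n : nat) (g : R) (q p : 'I_n -> R) (z : R[i]) : R[i] :=
  \tr (Qmx q *m \adj (z%:M - Lmx g q p)).

From HB Require Import structures.
From mathcomp Require Import all_boot all_order all_algebra.
From mathcomp Require Import complex.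
From mathcomp Require Import ring.
Import Order.TTheory GRing.Theory Num.Theory.
Local Open Scope ring_scope.

(* Write P = adj(x - L), A = det(x - L), J for the all-ones matrix and c = i g, so that
   [Q, L] = c (J - 1) and C(z) - D(z) = tr(Q P (J - 1)) at x = z.  Jacobi's formula gives
   A' = tr P, and differentiating (x - L) P = A gives A A'' = A'^2 - tr(P^2).  Since P commutes
   with L, conjugating [Q, L] by P gives A [Q, P] = c P (J - 1) P, and tr(P [B, L]) = 0 for
   B = Q, Q^2 gives tr(P (J - 1)) = tr(P^2 (J - 1)) = 0 and tr(P Q (J - 1)) = - tr(Q P (J - 1)).
   Hence A * 2 tr(Q P (J - 1)) = c tr((P (J - 1))^2) = c (A'^2 - tr(P^2)) = c A A'', the middle
   step because J has rank one; A is monic, so it cancels.  If c = 0, P commutes with the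
   diagonal Q, whose entries are distinct, so P is diagonal and both sides vanish. *)

Set Implicit Arguments. Unset Strict Implicit. Unset Printing Implicit Defensive.

Section JacobiFormula.
Variable R : comNzRingType.

Lemma deriv_prod m (F : 'I_m -> {poly R}) :
  (\prod_(i < m) F i)^`() = \sum_(i < m) (F i)^`() * \prod_(j < m | j != i) F j.
Proof.
elim: m F => [|m IH] F; first by rewrite !big_ord0 -polyC1 derivC.
rewrite big_ord_recr derivM IH big_ord_recr /= big_distrl /=; congr (_ + _).
  apply: eq_bigr => i _; rewrite -mulrA; congr (_ * _).
  rewrite [RHS](big_mkcond (fun j => j != _)) big_ord_recr /= -big_mkcond /=.
  by rewrite -(inj_eq val_inj) /= neq_ltn ltn_ord orbT.
rewrite mulrC (big_mkcond (fun j => j != ord_max)) big_ord_recr /= eqxx mulr1.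
congr (_ * _); apply: eq_bigr => i _.
by rewrite -(inj_eq val_inj) /= neq_ltn ltn_ord.
Qed.

Lemma deriv_sign (b : bool) : ((-1) ^+ b : {poly R})^`() = 0.
Proof. by rewrite -polyCN -rmorphXn derivC. Qed.

Lemma deriv_det m (M : 'M[{poly R}]_m) :
  (\det M)^`() = \tr (map_mx deriv M *m \adj M).
Proof.
rewrite /(\det M) linear_sum /=.
under eq_bigr do rewrite derivM deriv_sign mul0r add0r deriv_prod big_distrr.
rewrite exchange_big /=; apply: eq_bigr => i _.
pose Mi := \matrix_(k, l) if k == i then (M k l)^`() else M k l.
have -> : (map_mx deriv M *m \adj M) i i = \det Mi.
  rewrite (expand_det_row _ i) mxE; apply: eq_bigr => j _.
  rewrite !mxE eqxx; congr (_ * (_ * \det _)); apply/matrixP => a b.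
  by rewrite !mxE eq_sym (negbTE (neq_lift i a)).
apply: eq_bigr => s _; rewrite [in RHS](bigD1 i) //= mxE eqxx.
by congr (_ * (_ * _)); apply: eq_bigr => k /negbTE kNi; rewrite mxE kNi.
Qed.

End JacobiFormula.

Section CharPolyDerivatives.
Variable R : comNzRingType.

Lemma map_mx_derivM m n k (A : 'M[{poly R}]_(m, n)) (B : 'M_(n, k)) :
  map_mx deriv (A *m B) = map_mx deriv A *m B + A *m map_mx deriv B.
Proof.
apply/matrixP => i j; rewrite !mxE linear_sum -big_split /=.
by apply: eq_bigr => l _; rewrite derivM !mxE.
Qed.

Lemma map_mx_deriv_scalar m (a : {poly R}) :
  map_mx deriv (a%:M : 'M_m) = a^`()%:M.
Proof. by apply/matrixP => i j; rewrite !mxE derivMn. Qed.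

Lemma map_mx_deriv_char_poly_mx m (L : 'M[R]_m) :
  map_mx deriv (char_poly_mx L) = 1%:M.
Proof. by apply/matrixP => i j; rewrite !mxE derivB derivMn derivX derivC subr0. Qed.

Lemma mxtrace_map_deriv m (A : 'M[{poly R}]_m) :
  \tr (map_mx deriv A) = (\tr A)^`().
Proof. by rewrite /mxtrace linear_sum; apply: eq_bigr => i _; rewrite mxE. Qed.

Lemma deriv_char_poly m (L : 'M[R]_m) :
  (char_poly L)^`() = \tr (\adj (char_poly_mx L)).
Proof. by rewrite /char_poly deriv_det map_mx_deriv_char_poly_mx mul1mx. Qed.

Lemma char_poly_mul_deriv2 m (L : 'M[R]_m) :
  char_poly L * (char_poly L)^`(2) =
  (char_poly L)^`() ^+ 2 - \tr (\adj (char_poly_mx L) *m \adj (char_poly_mx L)).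
Proof.
set M := char_poly_mx L; set P := \adj M.
have := congr1 (mulmx P \o map_mx deriv) (mul_mx_adj M); rewrite /= -/P.
rewrite map_mx_derivM map_mx_deriv_char_poly_mx mul1mx map_mx_deriv_scalar.
rewrite mulmxDr mulmxA mul_adj_mx mul_scalar_mx mul_mx_scalar => /(congr1 mxtrace).
rewrite mxtraceD !mxtraceZ mxtrace_map_deriv -deriv_char_poly -/P.
by rewrite /char_poly -/M => dM; rewrite expr2 -dM; ring.
Qed.

Lemma adj_char_poly_mx_comm m (L : 'M[R]_m) :
  map_mx polyC L *m \adj (char_poly_mx L) = \adj (char_poly_mx L) *m map_mx polyC L.
Proof.
set P := \adj _; apply: (@addrI _ (- ('X%:M *m P))); apply: oppr_inj.
rewrite !opprD !opprK -mulmxBl -[in RHS]scalar_mxC -mulmxBr.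
by rewrite mul_mx_adj mul_adj_mx.
Qed.

Lemma mxtrace_adj_char_poly_mx_commutator m (L : 'M[R]_m) B :
  \tr (\adj (char_poly_mx L) *m (B *m map_mx polyC L - map_mx polyC L *m B)) = 0.
Proof.
rewrite mulmxBr raddfB /= mulmxA mxtrace_mulC mulmxA adj_char_poly_mx_comm.
by rewrite -!mulmxA subrr.
Qed.

End CharPolyDerivatives.

Section AllOnesMatrix.
Variable R : comNzRingType.

Lemma mxtrace_mul_const1 m (A : 'M[R]_m) :
  \tr (A *m const_mx 1) = \sum_i \sum_j A i j.
Proof.
by apply: eq_bigr => i _; rewrite mxE; apply: eq_bigr => j _; rewrite mxE mulr1.
Qed.

Lemma mxtrace_mul_const1_rank1 m (A B : 'M[R]_m) :
  \tr (A *m const_mx 1 *m B *m const_mx 1) =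
  \tr (A *m const_mx 1) * \tr (B *m const_mx 1).
Proof.
pose u : 'cV[R]_m := const_mx 1.
have -> : const_mx 1 = u *m u^T.
  by apply/matrixP => i j; rewrite !mxE big_ord1 !mxE mulr1.
rewrite !mulmxA mxtrace_mulC [\tr (A *m u *m _)]mxtrace_mulC.
rewrite [\tr (B *m u *m _)]mxtrace_mulC !mulmxA !trace_mx11.
have -> : u^T *m A *m u *m u^T *m B *m u = (u^T *m A *m u) *m (u^T *m B *m u).
  by rewrite !mulmxA.
by rewrite [in LHS]mxE big_ord1.
Qed.

Lemma mxtrace_diag_mul_hollow m (A : 'M[R]_m) :
  is_diag_mx A -> \tr (A *m (const_mx 1 - 1%:M)) = 0.
Proof.
move=> /is_diag_mxP A_diag; rewrite mulmxBr mulmx1 raddfB /= mxtrace_mul_const1.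
apply/eqP; rewrite subr_eq0; apply/eqP; apply: eq_bigr => i _.
rewrite (bigD1 i) //= big1 ?addr0 // => j /negPf ji.
by rewrite A_diag // eq_sym (inj_eq val_inj) ji.
Qed.

End AllOnesMatrix.

Lemma diag_mx_comm_is_diag (R : idomainType) m (d : 'I_m -> R) (A : 'M[R]_m) :
  injective d -> diag_mx (\row_j d j) *m A = A *m diag_mx (\row_j d j) ->
  is_diag_mx A.
Proof.
move=> d_inj /matrixP dA; apply/is_diag_mxP => i j ij.
have := dA i j; rewrite mul_diag_mx mul_mx_diag !mxE [A i j * _]mulrC => /eqP.
rewrite -subr_eq0 -mulrBl mulf_eq0 subr_eq0 => /orP[/eqP/d_inj ij'|/eqP //].
by rewrite ij' eqxx in ij.
Qed.

Section CommutatorIdentity.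
Variables (K : idomainType) (n : nat) (d : 'I_n -> K) (L : 'M[K]_n) (c : K).
Let Q := diag_mx (\row_j d j).
Hypothesis d_inj : injective d.
Hypothesis QL_comm : Q *m L - L *m Q = c *: (const_mx 1 - 1%:M).

Local Notation Qp := (map_mx polyC Q).
Local Notation Lp := (map_mx polyC L).
Local Notation P := (\adj (char_poly_mx L)).
Local Notation A := (char_poly L).
Local Notation X := (const_mx 1 - 1%:M : 'M[{poly K}]_n).

Lemma QL_comm_poly : Qp *m Lp - Lp *m Qp = c%:P *: X.
Proof.
by rewrite -!map_mxM -map_mxB QL_comm map_mxZ map_mxB map_const_mx map_mx1 rmorph1.
Qed.

Lemma char_poly_mx_Q_comm : char_poly_mx L *m Qp - Qp *m char_poly_mx L = c%:P *: X.
Proof.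
rewrite /char_poly_mx mulmxBl mulmxBr scalar_mxC -QL_comm_poly.
by rewrite opprB addrC addrA subrK.
Qed.

Lemma adj_Q_comm : A *: (Qp *m P - P *m Qp) = c%:P *: (P *m X *m P).
Proof.
rewrite scalemxAl scalemxAr -char_poly_mx_Q_comm mulmxBr mulmxBl !mulmxA mul_adj_mx.
by rewrite -!mulmxA mul_mx_adj mul_scalar_mx mul_mx_scalar -scalemxAr scalerBr.
Qed.

Section NonzeroCoupling.
Hypothesis c_neq0 : c != 0.

Let cancel_c (x : {poly K}) : c%:P * x = 0 -> x = 0.
Proof. by move/eqP; rewrite mulf_eq0 polyC_eq0 (negPf c_neq0) => /eqP. Qed.

Lemma mxtrace_adj_hollow : \tr (P *m X) = 0.
Proof.
apply: cancel_c; rewrite -mxtraceZ scalemxAr -QL_comm_poly.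
exact: mxtrace_adj_char_poly_mx_commutator.
Qed.

Lemma mxtrace_adj2_hollow : \tr (P *m P *m X) = 0.
Proof.
apply: cancel_c; rewrite -mulmxA mxtrace_mulC -mxtraceZ -adj_Q_comm mxtraceZ.
by rewrite raddfB /= mxtrace_mulC subrr mulr0.
Qed.

Lemma mxtrace_adj_Q_hollow : \tr (P *m Qp *m X) = - \tr (Qp *m P *m X).
Proof.
have QQL_comm : Qp *m Qp *m Lp - Lp *m (Qp *m Qp) = c%:P *: (Qp *m X + X *m Qp).
  rewrite scalerDr scalemxAr scalemxAl -QL_comm_poly mulmxBr mulmxBl !mulmxA.
  by rewrite addrA subrK.
have := mxtrace_adj_char_poly_mx_commutator L (Qp *m Qp).
rewrite QQL_comm -scalemxAr mxtraceZ => /cancel_c PQQL.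
rewrite mulmxDr mxtraceD !mulmxA [\tr (P *m X *m Qp)]mxtrace_mulC mulmxA in PQQL.
by apply/eqP; rewrite -addr_eq0 PQQL.
Qed.

Lemma mxtrace_adj_hollow_sqr : \tr (P *m X *m P *m X) = A * A^`(2).
Proof.
have PX : P *m X = P *m const_mx 1 - P by rewrite mulmxBr mulmx1.
have trPJ : \tr (P *m const_mx 1) = \tr P.
  by apply/eqP; rewrite -subr_eq0 -raddfB /= -PX mxtrace_adj_hollow.
have PPX : P *m P *m X = P *m P *m const_mx 1 - P *m P by rewrite mulmxBr mulmx1.
have trPPJ : \tr (P *m P *m const_mx 1) = \tr (P *m P).
  by apply/eqP; rewrite -subr_eq0 -raddfB /= -PPX mxtrace_adj2_hollow.
rewrite char_poly_mul_deriv2 deriv_char_poly -mulmxA PX mulmxBl !mulmxBr !raddfB /=.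
rewrite !mulmxA mxtrace_mul_const1_rank1 trPJ.
by rewrite [\tr (P *m const_mx 1 *m P)]mxtrace_mulC mulmxA trPPJ; ring.
Qed.

Lemma mxtrace_Q_adj_hollow_coupled : 2%:R * \tr (Qp *m P *m X) = c%:P * A^`(2).
Proof.
have A_neq0 := monic_neq0 (char_poly_monic L).
have := congr1 (fun B => \tr (B *m X)) adj_Q_comm => /= trX.
rewrite -!scalemxAl !mxtraceZ mulmxBl raddfB /= mxtrace_adj_Q_hollow in trX.
apply: (mulfI A_neq0); rewrite [RHS]mulrCA -mxtrace_adj_hollow_sqr -trX; ring.
Qed.

End NonzeroCoupling.

Lemma mxtrace_Q_adj_hollow : 2%:R * \tr (Qp *m P *m X) = c%:P * A^`(2).
Proof.
have [c0|] := eqVneq c 0; last exact: mxtrace_Q_adj_hollow_coupled.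
have A_neq0 := monic_neq0 (char_poly_monic L).
have QP_comm : Qp *m P = P *m Qp.
  apply/eqP; rewrite -subr_eq0; apply/eqP.
  have := adj_Q_comm; rewrite c0 scale0r => /eqP.
  by rewrite scalemx_eq0 (negPf A_neq0) => /eqP.
have Qp_diag : Qp = diag_mx (\row_j (d j)%:P).
  by apply/matrixP => i j; rewrite !mxE raddfMn.
have P_diag : is_diag_mx P.
  apply: (diag_mx_comm_is_diag (d := fun j => (d j)%:P)); last by rewrite -Qp_diag.
  by move=> i j /polyC_inj /d_inj.
rewrite c0 mul0r mxtrace_diag_mul_hollow ?mulr0 //.
apply/is_diag_mxP => i j ij; rewrite Qp_diag mul_diag_mx mxE.
by move/is_diag_mxP: P_diag => ->; rewrite ?mulr0.
Qed.

End CommutatorIdentity.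

Lemma horner_mxtrace_adj_char_poly_mx (K : comNzRingType) m (B C L : 'M[K]_m) z :
  (\tr (map_mx polyC B *m \adj (char_poly_mx L) *m map_mx polyC C)).[z] =
  \tr (B *m \adj (z%:M - L) *m C).
Proof.
have evalC (D : 'M[K]_m) : map_mx (horner_eval z) (map_mx polyC D) = D.
  by apply/matrixP => i j; rewrite !mxE /= horner_evalE hornerC.
have -> : z%:M - L = map_mx (horner_eval z) (char_poly_mx L).
  apply/matrixP => i j; rewrite !mxE /= horner_evalE.
  by rewrite hornerD hornerN hornerMn hornerX hornerC.
by rewrite -horner_evalE -trace_map_mx !map_mxM map_mx_adj !evalC.
Qed.

Local Open Scope complex_scope.

Section CalogeroMoser.
Variables (R : rcfType) (n : nat) (g : R) (q p : 'I_n -> R).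
Hypothesis hq : in_config q.

Lemma in_config_inj : injective (fun j => (q j)%:C).
Proof.
move=> j k /= /eqP; rewrite eq_complex /= eqxx andbT => /eqP qjk.
by case: (ltngtP j k) => [/hq|/hq|/val_inj //]; rewrite qjk ltxx.
Qed.

Lemma Qmx_diag : Qmx q = diag_mx (\row_j (q j)%:C).
Proof. by apply/matrixP => j k; rewrite !mxE; case: eqP. Qed.

Lemma Lmx_commutator :
  Qmx q *m Lmx g q p - Lmx g q p *m Qmx q = ('i%C * g%:C) *: (const_mx 1 - 1%:M).
Proof.
apply/matrixP => j k; rewrite Qmx_diag mul_diag_mx mul_mx_diag !mxE.
have [->|jk] := eqVneq j k; first by rewrite mulrC subrr subrr mulr0.
have qjk : (q j)%:C - (q k)%:C != 0 by rewrite subr_eq0 (inj_eq in_config_inj).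
by rewrite subr0 mulr1; field.
Qed.

Lemma Cfun_sub_Dfun z :
  Cfun g q p z - Dfun g q p z =
  (\tr (map_mx polyC (Qmx q) *m \adj (char_poly_mx (Lmx g q p)) *m
        (const_mx 1 - 1%:M))).[z].
Proof.
have -> : const_mx 1 - 1%:M = map_mx polyC (const_mx 1 - 1%:M : 'M[R[i]]_n).
  by rewrite map_mxB map_const_mx map_mx1 rmorph1.
rewrite horner_mxtrace_adj_char_poly_mx mulmxBr mulmx1 raddfB /=.
congr (\tr (_ *m _) - _); apply/matrixP => j k.
by rewrite !mxE big_ord1 !mxE mulr1.
Qed.

End CalogeroMoser.

Unset Implicit Arguments. Set Strict Implicit. Set Printing Implicit Defensive.

Theorem mainTheorem2 (R : rcfType) (n : nat) (g : R) (q p : 'I_n -> R)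
  (hq : in_config q) (z : R[i]) :
  Cfun g q p z = Dfun g q p z + ('i%C * g%:C / 2%:R) * ((Apoly g q p)^`(2)).[z].
Proof.
have QL := Lmx_commutator g p hq; rewrite Qmx_diag in QL.
have := mxtrace_Q_adj_hollow (in_config_inj hq) QL; rewrite -Qmx_diag.
move/(congr1 (horner^~ z)); rewrite !hornerM hornerMn !hornerC -Cfun_sub_Dfun.
by rewrite /Apoly => CD; rewrite mulrAC -CD; field.
Qed.
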